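(* Let $\mathcal D_2:=\{y\in\mathbb C:(\Im y)^2<(\lambda_1+\lambda_2)\Re y+\frac14\lambda_2(2\lambda_1+\lambda_2)\}$. Then $\mathcal D_2\subset S$, where $S$ is the set defined below; consequently $\widehat{\boldsymbol\nu}_1$ extends to an analytic function on $\mathcal D_2$.
   Context: Let $\lambda_1,\lambda_2>0$ (with $\lambda_1=2(\delta_2-\delta_1)$, $\lambda_2=2(\delta_3-\delta_2)$ for reals $\delta_1<\delta_2<\delta_3$). $\widehat{\boldsymbol\nu}_1(y)=\int_0^\infty e^{-yu}\boldsymbol\nu_1(du)$ is the Laplace transform of the lateral measure $\boldsymbol\nu_1$ of the stationary gap process $(G,H)$ of the degenerate rank-based three-particle system, i.e. the solution of $G(t)=G(0)-\tfrac{\lambda_1}{2}t-W(t)-\tfrac12L^H(t)+L^G(t)$, $H(t)=H(0)-\tfrac{\lambda_2}{2}t+W(t)-\tfrac12L^G(t)+L^H(t)$ ($W$ a standard Brownian motion, $L^Z$ the local time of $Z$ at $0$), with invariant law $\boldsymbol\pi$, $\boldsymbol\nu_1(A)=\mathbb E^{\boldsymbol\pi}\int_0^2\mathbf 1_A(H(t))dL^G(t)$, $\boldsymbol\nu_2(A)=\mathbb E^{\boldsymbol\pi}\int_0^2\mathbf 1_A(G(t))dL^H(t)$; these satisfy the BAR $[(x-y)^2+\lambda_1x+\lambda_2y]\widehat{\boldsymbol\pi}(x,y)=(x-\tfrac y2)\widehat{\boldsymbol\nu}_1(y)+(y-\tfrac x2)\widehat{\boldsymbol\nu}_2(x)$ on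 $[0,\infty)^2$. Let $y^+=\lambda_1^2/(4(\lambda_1+\lambda_2))$, $A_1^+(y)=-\frac{\lambda_1}2+y+\sqrt{\frac{\lambda_1^2}4-(\lambda_1+\lambda_2)y}$ (principal square root, analytic on $\mathbb C\setminus[y^+,\infty)$, with $\Re A_1^+(y):=y-\lambda_1/2$ on the cut), and $S:=\{\Re y\ge0\}\cup\{\Re A_1^+(y)>0\}$, an open connected set to which $\widehat{\boldsymbol\nu}_1$ extends analytically. *)

From Stdlib Require Import Reals.
From Coquelicot Require Import Coquelicot.
Open Scope R_scope.

(* Principal square root of a complex number (branch cut on (-oo,0]):
   csqrt w = sqrt((|w|+Re w)/2) + i sgn(Im w) sqrt((|w|-Re w)/2),
   with sgn(0) = +1, so Re (csqrt w) >= 0. *)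
Definition csqrt (w : C) : C :=
  (sqrt ((Cmod w + Re w) / 2),
   if Rle_dec 0 (Im w) then sqrt ((Cmod w - Re w) / 2)
   else - sqrt ((Cmod w - Re w) / 2)).

Definition yplus (l1 l2 : R) : R := l1 ^ 2 / (4 * (l1 + l2)).

Definition A1plus (l1 l2 : R) (y : C) : C :=
  Cplus (Cplus (RtoC (- l1 / 2)) y)
        (csqrt (Cminus (RtoC (l1 ^ 2 / 4)) (Cmult (RtoC (l1 + l2)) y))).

Definition on_cut (l1 l2 : R) (y : C) : Prop :=
  Im y = 0 /\ yplus l1 l2 <= Re y.

(* Re A_1^+(y), with the convention Re A_1^+(y) := Re y - l1/2 on the cut *)
Definition ReA1plus_pos (l1 l2 : R) (y : C) : Prop :=
  (on_cut l1 l2 y /\ Re y - l1 / 2 > 0) \/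
  (~ on_cut l1 l2 y /\ Re (A1plus l1 l2 y) > 0).

Definition S_set (l1 l2 : R) (y : C) : Prop :=
  Re y >= 0 \/ ReA1plus_pos l1 l2 y.

Definition D2_set (l1 l2 : R) (y : C) : Prop :=
  (Im y) ^ 2 < (l1 + l2) * Re y + / 4 * l2 * (2 * l1 + l2).

(* Otherwise [D_2] forces
   [-l2 < Re y < 0]; such a [y] lies off the cut (which sits in [Re y > 0]),
   and [Re csqrt w >= sqrt (Re w)] with [Re w = l1^2/4 - (l1 + l2) Re y]
   exceeds [l1/2 - Re y] exactly because [Re y (Re y + l2) < 0]. *)

From Stdlib Require Import Reals Lra.
From Coquelicot Require Import Coquelicot.
Open Scope R_scope.

Lemma lt_Re_csqrt (w : C) (r : R) : 0 <= r -> r ^ 2 < Re w -> r < Re (csqrt w).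
Proof.
  intros Hr Hrw.
  assert (HReCmod : Re w <= Cmod w)
    by (apply Rle_trans with (Rabs (Re w)); [apply Rle_abs | apply re_le_Cmod]).
  unfold csqrt; simpl.
  rewrite <- (sqrt_pow2 r Hr).
  apply sqrt_lt_1_alt; split; [apply pow2_ge_0 | lra].
Qed.

Lemma Re_A1plus (l1 l2 : R) (y : C) :
  Re (A1plus l1 l2 y)
  = Re y - l1 / 2 + Re (csqrt (RtoC (l1 ^ 2 / 4) - RtoC (l1 + l2) * y)).
Proof.
  unfold A1plus.
  generalize (csqrt (RtoC (l1 ^ 2 / 4) - RtoC (l1 + l2) * y)); intros s.
  destruct y, s; simpl; lra.
Qed.

Lemma Re_A1plus_radicand (l1 l2 : R) (y : C) :
  Re (RtoC (l1 ^ 2 / 4) - RtoC (l1 + l2) * y) = l1 ^ 2 / 4 - (l1 + l2) * Re y.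
Proof. destruct y; simpl; ring. Qed.

Lemma Re_A1plus_gt0 (l1 l2 : R) (y : C) :
  0 < l1 -> -l2 < Re y < 0 -> Re (A1plus l1 l2 y) > 0.
Proof.
  intros Hl1 Hy.
  rewrite Re_A1plus.
  enough (l1 / 2 - Re y < Re (csqrt (RtoC (l1 ^ 2 / 4) - RtoC (l1 + l2) * y)))
    by lra.
  apply lt_Re_csqrt; [lra |].
  rewrite Re_A1plus_radicand.
  nra.
Qed.

Lemma yplus_gt0 (l1 l2 : R) : 0 < l1 -> 0 < l2 -> 0 < yplus l1 l2.
Proof. intros; unfold yplus; apply Rdiv_lt_0_compat; nra. Qed.

Lemma not_on_cut_Re_lt0 (l1 l2 : R) (y : C) :
  0 < l1 -> 0 < l2 -> Re y < 0 -> ~ on_cut l1 l2 y.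
Proof.
  intros Hl1 Hl2 Hy [_ Hcut].
  pose proof (yplus_gt0 l1 l2 Hl1 Hl2); lra.
Qed.

Lemma D2_Re_gt (l1 l2 : R) (y : C) :
  0 < l1 -> 0 < l2 -> D2_set l1 l2 y -> - l2 < Re y.
Proof.
  unfold D2_set; intros Hl1 Hl2 HD.
  pose proof (pow2_ge_0 (Im y)).
  nra.
Qed.

Theorem mainTheorem10 :
  forall (l1 l2 : R), 0 < l1 -> 0 < l2 ->
  forall y : C, D2_set l1 l2 y -> S_set l1 l2 y.
Proof.
  intros l1 l2 Hl1 Hl2 y HD.
  destruct (Rle_dec 0 (Re y)) as [Hy | Hy]; [left; lra |].
  right; right; split.
  - exact (not_on_cut_Re_lt0 l1 l2 y Hl1 Hl2 (Rnot_le_lt _ _ Hy)).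
  - apply Re_A1plus_gt0; [exact Hl1 |].
    pose proof (D2_Re_gt l1 l2 y Hl1 Hl2 HD); lra.
Qed.
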